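(* Under the standing assumptions, assume $n\le m$ and that all kept singular values $S_{kk}$ are strictly positive. Set $\widetilde{dU}_2:=(\mathbb{1}_n-UU^\dagger)dU$ and $\widetilde{dV}_2:=(\mathbb{1}_m-VV^\dagger)dV$. Then $dU=U(U^\dagger dU)+\widetilde{dU}_2$, $dV=V(V^\dagger dV)+\widetilde{dV}_2$, the matrix $\widetilde{dU}_2$ satisfies the Sylvester equation $$\widetilde{dU}_2\,S^2-AA^\dagger\,\widetilde{dU}_2=(\mathbb{1}_n-UU^\dagger)\,dA\,V S+A(\mathbb{1}_m-VV^\dagger)\,dA^\dagger U,$$ and $$\widetilde{dV}_2=(\mathbb{1}_m-VV^\dagger)\,dA^\dagger U S^{-1}+A^\dagger\,\widetilde{dU}_2\,S^{-1}.$$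
   Context: Let $n,m\ge1$, $r=\min(n,m)$ and $1\le t<r$. Let $\tau\mapsto A(\tau)\in\mathbb{C}^{n\times m}$ be differentiable, and suppose there are differentiable maps $\tau\mapsto U\in\mathbb{C}^{n\times t}$, $S\in\mathbb{R}^{t\times t}$, $V\in\mathbb{C}^{m\times t}$, $U_\perp\in\mathbb{C}^{n\times(r-t)}$, $S_\perp\in\mathbb{R}^{(r-t)\times(r-t)}$, $V_\perp\in\mathbb{C}^{m\times(r-t)}$ such that for every $\tau$: $A=USV^\dagger+U_\perp S_\perp V_\perp^\dagger$ is a (thin) singular value decomposition, i.e. $S,S_\perp$ are diagonal with nonnegative entries, $(U\,|\,U_\perp)$ and $(V\,|\,V_\perp)$ have orthonormal columns. Here $d$ denotes the derivative with respect to $\tau$, $^\dagger$ the conjugate transpose, $\mathbb{1}_k$ the $k\times k$ identity. (The formulas involve only $A,dA,U,S,V$, not $U_\perp,S_\perp,V_\perp$.) *)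

From HB Require Import structures.
From mathcomp Require Import all_boot all_order all_algebra.
From mathcomp Require Import complex.
From mathcomp Require Import reals topology normedtype derive.
Set Implicit Arguments. Unset Strict Implicit. Unset Printing Implicit Defensive.
Import Order.TTheory GRing.Theory Num.Theory.
Import numFieldNormedType.Exports.
Local Open Scope ring_scope.

Definition ctr (R : rcfType) (n m : nat) (A : 'M[R[i]]_(n, m)) : 'M[R[i]]_(m, n) :=
  (map_mx (@conjc R) A)^T.

Definition cplx_mx (R : rcfType) (n m : nat) (S : 'M[R]_(n, m)) : 'M[R[i]]_(n, m) :=
  map_mx (real_complex R) S.

Definition has_cderiv (R : realType) (f df : R -> R[i]) : Prop :=
  forall t : R, is_derive t 1 (fun s => @complex.Re R (f s)) (@complex.Re R (df t)) /\
                is_derive t 1 (fun s => @complex.Im R (f s)) (@complex.Im R (df t)).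

Definition has_mxderiv (R : realType) (n m : nat)
  (A dA : R -> 'M[R[i]]_(n, m)) : Prop :=
  forall i j, has_cderiv (fun s => A s i j) (fun s => dA s i j).

Definition has_rmxderiv (R : realType) (n m : nat)
  (A dA : R -> 'M[R]_(n, m)) : Prop :=
  forall (i : 'I_n) (j : 'I_m) (t : R), is_derive t 1 (fun s => A s i j) (dA t i j).

Definition cmx_differentiable (R : realType) (n m : nat) (A : R -> 'M[R[i]]_(n, m)) :=
  exists dA, has_mxderiv A dA.

Definition rmx_differentiable (R : realType) (n m : nat) (A : R -> 'M[R]_(n, m)) :=
  exists dA, has_rmxderiv A dA.

Definition nonneg_diag (R : realType) (k : nat) (S : 'M[R]_k) : Prop :=
  (forall i j : 'I_k, i != j -> S i j = 0) /\ (forall i : 'I_k, 0 <= S i i).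

Definition orthonormal_cols (R : rcfType) (n k : nat) (W : 'M[R[i]]_(n, k)) : Prop :=
  ctr W *m W = 1%:M.

From HB Require Import structures.
From mathcomp Require Import all_boot all_order all_algebra.
From mathcomp Require Import complex.
From mathcomp Require Import boolp functions reals topology normedtype derive.
From mathcomp Require Import ring.
Import Order.TTheory GRing.Theory Num.Theory.
Import numFieldNormedType.Exports.
Local Open Scope ring_scope.
Set Implicit Arguments. Unset Strict Implicit. Unset Printing Implicit Defensive.

(* Differentiating the identities A V = U S and A^dagger U = V S, which follow
   from the SVD and the orthonormality of the columns, gives
     dA V + A dV = dU S + U dS   and   dA^dagger U + A^dagger dU = dV S + V dS.
   The unknown dS is removed by multiplying on the left with the projections
   P = 1 - U U^dagger and Q = 1 - V V^dagger, which kill U and V.  Using the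
   intertwining relations P A = A Q and Q A^dagger = A^dagger P, the two
   projected identities become
     P dA V = P dU S - A Q dV   and   Q dA^dagger U = Q dV S - A^dagger P dU;
   multiplying the second by A and adding the first times S yields the
   Sylvester equation, while solving the second for Q dV (S is invertible)
   gives the formula for Q dV. *)

Section ComplexDerivative.
Variable R : realType.
Local Notation Re := (@complex.Re R).
Local Notation Im := (@complex.Im R).

Lemma ReD (x y : R[i]) : Re (x + y) = Re x + Re y.
Proof. by case: x; case: y. Qed.

Lemma ImD (x y : R[i]) : Im (x + y) = Im x + Im y.
Proof. by case: x; case: y. Qed.

Lemma ReM (x y : R[i]) : Re (x * y) = Re x * Re y - Im x * Im y.
Proof. by case: x; case: y. Qed.

Lemma ImM (x y : R[i]) : Im (x * y) = Re x * Im y + Im x * Re y.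
Proof. by case: x; case: y. Qed.

Lemma ReJ (x : R[i]) : Re (conjc x) = Re x.
Proof. by case: x. Qed.

Lemma ImJ (x : R[i]) : Im (conjc x) = - Im x.
Proof. by case: x. Qed.

Lemma is_derive_eqfun (t : R) (F G : R -> R) (d d' : R) :
  is_derive t 1 F d -> F =1 G -> d = d' -> is_derive t 1 G d'.
Proof. by move=> dF /funext <- <-. Qed.

Lemma has_cderiv0 : has_cderiv (0 : R -> R[i]) 0.
Proof. by move=> t; split; apply: is_derive_cst. Qed.

Lemma has_cderivD (f g df dg : R -> R[i]) :
  has_cderiv f df -> has_cderiv g dg -> has_cderiv (f + g) (df + dg).
Proof.
move=> hf hg t; have [f1 f2] := hf t; have [g1 g2] := hg t; split.
- by apply: is_derive_eqfun (is_deriveD f1 g1) _ _ => [s|]; rewrite /= ReD.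
- by apply: is_derive_eqfun (is_deriveD f2 g2) _ _ => [s|]; rewrite /= ImD.
Qed.

Lemma has_cderiv_sum (I : Type) (r : seq I) (P : pred I) (f df : I -> R -> R[i]) :
  (forall i, P i -> has_cderiv (f i) (df i)) ->
  has_cderiv (fun s => \sum_(i <- r | P i) f i s) (fun s => \sum_(i <- r | P i) df i s).
Proof.
move=> hf; rewrite -!fct_sumE.
apply: (big_ind2 (@has_cderiv R)) => // [|f1 df1 f2 df2]; [exact: has_cderiv0 | exact: has_cderivD].
Qed.

Lemma has_cderivM (f g df dg : R -> R[i]) :
  has_cderiv f df -> has_cderiv g dg -> has_cderiv (f * g) (df * g + f * dg).
Proof.
move=> hf hg t; have [f1 f2] := hf t; have [g1 g2] := hg t; split.
- apply: is_derive_eqfun (is_deriveB (is_deriveM f1 g1) (is_deriveM f2 g2)) _ _ => [s|].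
    by rewrite /= ReM.
  by rewrite /= ReD !ReM /GRing.scale /=; ring.
- apply: is_derive_eqfun (is_deriveD (is_deriveM f1 g2) (is_deriveM f2 g1)) _ _ => [s|].
    by rewrite /= ImM.
  by rewrite /= ImD !ImM /GRing.scale /=; ring.
Qed.

Lemma has_cderivJ (f df : R -> R[i]) :
  has_cderiv f df -> has_cderiv (conjc \o f) (conjc \o df).
Proof.
move=> hf t; have [f1 f2] := hf t; split.
- by apply: is_derive_eqfun f1 _ _ => [s|]; rewrite /= ReJ.
- by apply: is_derive_eqfun (is_deriveN f2) _ _ => [s|]; rewrite /= ImJ.
Qed.

Lemma has_cderiv_real (f df : R -> R) : (forall t : R, is_derive t 1 f (df t)) ->
  has_cderiv (fun s => real_complex R (f s)) (fun s => real_complex R (df s)).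
Proof. by move=> hf t; split; [exact: hf | exact: is_derive_cst]. Qed.

Lemma eq_has_cderiv (f g df dg : R -> R[i]) :
  has_cderiv f df -> f =1 g -> df =1 dg -> has_cderiv g dg.
Proof. by move=> hf /funext <- /funext <-. Qed.

Lemma has_cderiv_unique (f df dg : R -> R[i]) t :
  has_cderiv f df -> has_cderiv f dg -> df t = dg t.
Proof.
move=> /(_ t)[Rdf Idf] /(_ t)[Rdg Idg].
apply/eqP; rewrite eq_complex; apply/andP; split; apply/eqP.
- by rewrite -(@derive_val _ _ _ _ _ _ _ Rdf) (@derive_val _ _ _ _ _ _ _ Rdg).
- by rewrite -(@derive_val _ _ _ _ _ _ _ Idf) (@derive_val _ _ _ _ _ _ _ Idg).
Qed.

End ComplexDerivative.

Section MatrixDerivative.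
Variable R : realType.

Lemma has_mxderivM n m p (A dA : R -> 'M[R[i]]_(n, m)) (B dB : R -> 'M[R[i]]_(m, p)) :
  has_mxderiv A dA -> has_mxderiv B dB ->
  has_mxderiv (fun s => A s *m B s) (fun s => dA s *m B s + A s *m dB s).
Proof.
move=> hA hB i j.
have hsum := has_cderiv_sum (index_enum 'I_m) (P := xpredT)
  (fun l _ => has_cderivM (hA i l) (hB l j)).
by apply: (eq_has_cderiv hsum) => s; rewrite !mxE // -big_split.
Qed.

Lemma has_mxderiv_ctr n m (A dA : R -> 'M[R[i]]_(n, m)) :
  has_mxderiv A dA -> has_mxderiv (fun s => ctr (A s)) (fun s => ctr (dA s)).
Proof. by move=> hA i j; apply: eq_has_cderiv (has_cderivJ (hA j i)) _ _ => s; rewrite !mxE. Qed.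

Lemma has_mxderiv_cplx n m (S dS : R -> 'M[R]_(n, m)) :
  has_rmxderiv S dS -> has_mxderiv (fun s => cplx_mx (S s)) (fun s => cplx_mx (dS s)).
Proof. by move=> hS i j; apply: eq_has_cderiv (has_cderiv_real (hS i j)) _ _ => s; rewrite !mxE. Qed.

Lemma mxderiv_mulmx_eq n m k p tau
    (A dA : R -> 'M[R[i]]_(n, m)) (B dB : R -> 'M[R[i]]_(m, p))
    (C dC : R -> 'M[R[i]]_(n, k)) (D dD : R -> 'M[R[i]]_(k, p)) :
  (forall s, A s *m B s = C s *m D s) ->
  has_mxderiv A dA -> has_mxderiv B dB -> has_mxderiv C dC -> has_mxderiv D dD ->
  dA tau *m B tau + A tau *m dB tau = dC tau *m D tau + C tau *m dD tau.
Proof.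
move=> eAB hA hB hC hD; apply/matrixP => i j.
have hCD : has_cderiv (fun s => (A s *m B s) i j) (fun s => (dC s *m D s + C s *m dD s) i j).
  by apply: eq_has_cderiv (has_mxderivM hC hD i j) _ _ => s; rewrite ?eAB.
exact: has_cderiv_unique (has_mxderivM hA hB i j) hCD.
Qed.

End MatrixDerivative.

Section ConjugateTranspose.
Variable R : realType.
Local Notation C := R[i].

Lemma ctrM n m p (A : 'M[C]_(n, m)) (B : 'M[C]_(m, p)) : ctr (A *m B) = ctr B *m ctr A.
Proof. by rewrite /ctr map_mxM trmx_mul. Qed.

Lemma ctrD n m (A B : 'M[C]_(n, m)) : ctr (A + B) = ctr A + ctr B.
Proof. by rewrite /ctr map_mxD linearD. Qed.

Lemma ctrK n m (A : 'M[C]_(n, m)) : ctr (ctr A) = A.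
Proof. by apply/matrixP => i j; rewrite /ctr !mxE conjcK. Qed.

Lemma ctr_row_mx n k l (X : 'M[C]_(n, k)) (Y : 'M[C]_(n, l)) :
  ctr (row_mx X Y) = col_mx (ctr X) (ctr Y).
Proof. by rewrite /ctr map_row_mx tr_row_mx. Qed.

Lemma orthonormal_cols_row_mx n k l (X : 'M[C]_(n, k)) (Y : 'M[C]_(n, l)) :
  orthonormal_cols (row_mx X Y) ->
  [/\ ctr X *m X = 1%:M, ctr X *m Y = 0, ctr Y *m X = 0 & ctr Y *m Y = 1%:M].
Proof.
rewrite /orthonormal_cols ctr_row_mx mul_col_row scalar_mx_block.
by case/eq_block_mx.
Qed.

Lemma ctr_cplx_mx_diag k (S : 'M[R]_k) : nonneg_diag S -> ctr (cplx_mx S) = cplx_mx S.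
Proof.
move=> [offdiag _]; apply/matrixP => i j; rewrite /ctr /cplx_mx !mxE conjc_real.
by have [->|ne] := eqVneq i j; rewrite // !offdiag // eq_sym.
Qed.

Lemma cplx_mx_diag_unit k (S : 'M[R]_k) :
  nonneg_diag S -> (forall l, 0 < S l l) -> cplx_mx S \in unitmx.
Proof.
move=> [offdiag _] S_pos.
have -> : cplx_mx S = diag_mx (\row_l real_complex R (S l l)).
  apply/matrixP => i j; rewrite /cplx_mx !mxE.
  have [<-|ne] := eqVneq i j; first by rewrite mulr1n.
  by rewrite (offdiag _ _ ne) mulr0n.
rewrite unitmxE det_diag unitfE; apply/prodf_neq0 => l _; rewrite mxE.
by rewrite eq_complex negb_and /= (gt_eqF (S_pos l)).
Qed.

End ConjugateTranspose.

Section SVDRelations.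
Variable R : realType.
Local Notation C := R[i].
Variables (n m t k : nat) (A : 'M[C]_(n, m)) (Sc : 'M[C]_t) (Sp : 'M[C]_k).
Variables (U : 'M[C]_(n, t)) (Up : 'M[C]_(n, k)) (V : 'M[C]_(m, t)) (Vp : 'M[C]_(m, k)).
Hypothesis A_svd : A = U *m Sc *m ctr V + Up *m Sp *m ctr Vp.

Lemma svd_mulmx_right : orthonormal_cols (row_mx V Vp) -> A *m V = U *m Sc.
Proof.
case/orthonormal_cols_row_mx => VV _ VpV _.
by rewrite A_svd mulmxDl -!mulmxA VV VpV !mulmx0 addr0 mulmx1.
Qed.

Lemma svd_ctr_mulmx_left : orthonormal_cols (row_mx U Up) -> ctr A *m U = V *m ctr Sc.
Proof.
case/orthonormal_cols_row_mx => UU _ UpU _.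
by rewrite A_svd ctrD !ctrM !ctrK mulmxDl -!mulmxA UU UpU !mulmx0 addr0 mulmx1.
Qed.

End SVDRelations.

Section ProjectedDerivatives.
Variable R : realType.
Local Notation C := R[i].

Lemma proj_add_compl n k l (U : 'M[C]_(n, k)) (X : 'M[C]_(n, l)) :
  X = U *m (ctr U *m X) + (1%:M - U *m ctr U) *m X.
Proof. by rewrite mulmxBl mul1mx mulmxA addrC subrK. Qed.

Lemma proj_compl_mulmx n k (U : 'M[C]_(n, k)) :
  ctr U *m U = 1%:M -> (1%:M - U *m ctr U) *m U = 0.
Proof. by move=> UU; rewrite mulmxBl mul1mx -mulmxA UU mulmx1 subrr. Qed.

Variables (n m t : nat) (A : 'M[C]_(n, m)) (U : 'M[C]_(n, t)) (V : 'M[C]_(m, t)).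
Variable Sc : 'M[C]_t.
Hypotheses (UU : ctr U *m U = 1%:M) (VV : ctr V *m V = 1%:M) (Sc_herm : ctr Sc = Sc).
Hypotheses (AV : A *m V = U *m Sc) (AU : ctr A *m U = V *m Sc).
Local Notation P := (1%:M - U *m ctr U).
Local Notation Q := (1%:M - V *m ctr V).

Lemma proj_compl_intertwine : P *m A = A *m Q.
Proof.
have UA : ctr U *m A = Sc *m ctr V by rewrite -[A]ctrK -ctrM AU ctrM Sc_herm.
by rewrite mulmxBl mulmxBr mul1mx mulmx1 -mulmxA UA !mulmxA AV.
Qed.

Lemma proj_compl_intertwine_ctr : Q *m ctr A = ctr A *m P.
Proof.
have VA : ctr V *m ctr A = Sc *m ctr U by rewrite -ctrM AV ctrM Sc_herm.
by rewrite mulmxBl mulmxBr mul1mx mulmx1 -mulmxA VA !mulmxA AU.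
Qed.

Variables (dA : 'M[C]_(n, m)) (dU : 'M[C]_(n, t)) (dV : 'M[C]_(m, t)) (dSc : 'M[C]_t).
Hypothesis dAV : dA *m V + A *m dV = dU *m Sc + U *m dSc.
Hypothesis dAU : ctr dA *m U + ctr A *m dU = dV *m Sc + V *m dSc.

Lemma proj_compl_dAV : P *m dA *m V = P *m dU *m Sc - A *m Q *m dV.
Proof.
have E := congr1 (mulmx P) dAV.
rewrite !mulmxDr !mulmxA proj_compl_mulmx // mul0mx addr0 proj_compl_intertwine in E.
by rewrite -E addrK.
Qed.

Lemma proj_compl_dAU : Q *m ctr dA *m U = Q *m dV *m Sc - ctr A *m P *m dU.
Proof.
have E := congr1 (mulmx Q) dAU.
rewrite !mulmxDr !mulmxA proj_compl_mulmx // mul0mx addr0 proj_compl_intertwine_ctr in E.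
by rewrite -E addrK.
Qed.

Lemma proj_compl_sylvester :
  P *m dU *m (Sc *m Sc) - A *m ctr A *m (P *m dU)
    = P *m dA *m V *m Sc + A *m Q *m ctr dA *m U.
Proof.
have AdAU := congr1 (mulmx A) proj_compl_dAU; rewrite mulmxBr !mulmxA in AdAU.
by rewrite proj_compl_dAV AdAU [(_ - A *m Q *m dV) *m Sc]mulmxBl !mulmxA addrA subrK.
Qed.

Lemma proj_compl_dV : Sc \in unitmx ->
  Q *m dV = Q *m ctr dA *m U *m invmx Sc + ctr A *m (P *m dU) *m invmx Sc.
Proof.
move=> Sc_unit.
by rewrite -mulmxDl proj_compl_dAU mulmxA subrK mulmxK.
Qed.

End ProjectedDerivatives.

Unset Implicit Arguments.

Theorem mainTheorem7 (R : realType) (n m t : nat)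
  (A dA : R -> 'M[R[i]]_(n, m))
  (U dU : R -> 'M[R[i]]_(n, t)) (S : R -> 'M[R]_t) (V dV : R -> 'M[R[i]]_(m, t))
  (Up : R -> 'M[R[i]]_(n, minn n m - t)) (Sp : R -> 'M[R]_(minn n m - t))
  (Vp : R -> 'M[R[i]]_(m, minn n m - t)) :
  (1 <= t)%N -> (t < minn n m)%N ->
  has_mxderiv A dA -> has_mxderiv U dU -> rmx_differentiable S ->
  has_mxderiv V dV -> cmx_differentiable Up -> rmx_differentiable Sp ->
  cmx_differentiable Vp ->
  (forall tau : R,
     A tau = U tau *m cplx_mx (S tau) *m ctr (V tau)
             + Up tau *m cplx_mx (Sp tau) *m ctr (Vp tau) /\
     nonneg_diag (S tau) /\ nonneg_diag (Sp tau) /\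
     orthonormal_cols (row_mx (U tau) (Up tau)) /\
     orthonormal_cols (row_mx (V tau) (Vp tau))) ->
  (n <= m)%N ->
  forall tau : R,
  (forall k : 'I_t, 0 < S tau k k) ->
    let Sc := cplx_mx (S tau) in
    let dU2 := (1%:M - U tau *m ctr (U tau)) *m dU tau in
    let dV2 := (1%:M - V tau *m ctr (V tau)) *m dV tau in
    [/\ dU tau = U tau *m (ctr (U tau) *m dU tau) + dU2,
        dV tau = V tau *m (ctr (V tau) *m dV tau) + dV2,
        dU2 *m (Sc *m Sc) - A tau *m ctr (A tau) *m dU2
          = (1%:M - U tau *m ctr (U tau)) *m dA tau *m V tau *m Sc
            + A tau *m (1%:M - V tau *m ctr (V tau)) *m ctr (dA tau) *m U tau
      & dV2 = (1%:M - V tau *m ctr (V tau)) *m ctr (dA tau) *m U tau *m invmx Sc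
              + ctr (A tau) *m dU2 *m invmx Sc].
Proof.
move=> _ _ hA hU [dS hS] hV _ _ _ svd _ tau S_pos Sc dU2 dV2.
have AV s : A s *m V s = U s *m cplx_mx (S s).
  by have [A_svd [_ [_ [_ oV]]]] := svd s; apply: svd_mulmx_right A_svd oV.
have AU s : ctr (A s) *m U s = V s *m cplx_mx (S s).
  have [A_svd [Sdiag [_ [oU _]]]] := svd s.
  by rewrite (svd_ctr_mulmx_left A_svd oU) ctr_cplx_mx_diag.
have hSc := has_mxderiv_cplx hS.
have dAV := mxderiv_mulmx_eq tau AV hA hV hU hSc.
have dAU := mxderiv_mulmx_eq tau AU (has_mxderiv_ctr hA) hU hV hSc.
have [_ [Sdiag [_ [oU oV]]]] := svd tau.
have [UU _ _ _] := orthonormal_cols_row_mx oU.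
have [VV _ _ _] := orthonormal_cols_row_mx oV.
have Sc_herm := ctr_cplx_mx_diag Sdiag.
have sylvester := proj_compl_sylvester UU VV Sc_herm (AV tau) (AU tau) dAV dAU.
have dV2E := proj_compl_dV VV Sc_herm (AV tau) (AU tau) dAU (cplx_mx_diag_unit Sdiag S_pos).
by split => //; apply: proj_add_compl.
Qed.
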